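(* Let $\mathcal{A}=(Q,A,\delta,q_0,F)$ be a semi-flower automaton. Then for every letter $b\in A$, $\mathcal{A}$ is a one-cluster automaton with respect to $b$; that is, the sub-digraph of the state digraph of $\mathcal{A}$ consisting of all states and all $b$-edges has exactly one $b$-cluster.
   Context: An automaton over a finite alphabet $A$ is a quintuple $\mathcal{A}=(Q,A,\delta,q_0,F)$ with $Q$ a non-empty finite set of states, initial state $q_0\in Q$, set of final states $F\subseteq Q$, and total transition function $\delta:Q\times A\to Q$. Its digraph $D(\mathcal{A})$ has vertex set $Q$ and, for each $p\in Q$, $a\in A$, an edge labeled $a$ (an $a$-edge) from $p$ to $\delta(p,a)$. A path is an alternating sequence $v_0,e_1,v_1,\dots,e_k,v_k$ of distinct vertices and edges with $e_i$ going from $v_{i-1}$ to $v_i$; a cycle is a path with at least one edge whose initial and terminal vertices coincide. A state $q$ is accessible if there is a path from $q_0$ to $q$, and co-accessible if there is a path from $q$ to a final state. $\mathcal{A}$ is a semi-flower automaton (SFA) if $F=\{q_0\}$, every state is accessible and co-accessible, and every cycle in $D(\mathcal{A})$ passes through $q_0$. For $b\in A$, let $\mathcal{R}$ be the sub-digraph of $D(\mathcal{A})$ formed by the $b$-edges; a $b$-cluster is a connected component of (the underlying graph of) $\mathcal{R}$. An automaton is a one-cluster automaton with respect to $b$ if it has exactly one $b$-cluster. *)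

From mathcomp Require Import all_boot.
Set Implicit Arguments. Unset Strict Implicit. Unset Printing Implicit Defensive.

(* The digraph D(A) has vertex set Q and, for each (p, a) : Q * A, an
   a-edge from p to delta p a; we identify that edge with the pair (p, a). *)

Section Automata.
Variables (Q A : finType) (delta : Q -> A -> Q).

Definition src (e : Q * A) : Q := e.1.
Definition tgt (e : Q * A) : Q := delta e.1 e.2.

Fixpoint walk_from (v : Q) (es : seq (Q * A)) : bool :=
  if es is e :: es' then (src e == v) && walk_from (tgt e) es' else true.

Definition walk_verts (v0 : Q) (es : seq (Q * A)) : seq Q := v0 :: map tgt es.

Definition is_path (u : Q) (es : seq (Q * A)) (w : Q) : bool :=
  [&& walk_from u es, uniq (walk_verts u es), uniq es & last u (map tgt es) == w].

(* a cycle: a path with at least one edge whose initial and terminal vertices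
   coincide (the only repeated vertex being v0 = vk) *)
Definition is_cycle (v0 : Q) (es : seq (Q * A)) : bool :=
  [&& walk_from v0 es, 0 < size es, last v0 (map tgt es) == v0,
      uniq (map tgt es) & uniq es].

Definition accessible (q0 q : Q) : Prop := exists es, is_path q0 es q.
Definition coaccessible (F : {set Q}) (q : Q) : Prop :=
  exists es f, f \in F /\ is_path q es f.

Definition semi_flower (q0 : Q) (F : {set Q}) : Prop :=
  [/\ F = [set q0],
      forall q, accessible q0 q,
      forall q, coaccessible F q &
      forall v0 es, is_cycle v0 es -> q0 \in walk_verts v0 es].

Definition b_adj (b : A) : rel Q := fun p q => (delta p b == q) || (delta q b == p).

Definition b_clusters (b : A) : {set {set Q}} :=
  [set [set y | connect (b_adj b) x y] | x : Q].

Definition one_cluster (b : A) : Prop := #|b_clusters b| = 1.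

End Automata.

From mathcomp Require Import all_boot.

Set Implicit Arguments.
Unset Strict Implicit.
Unset Printing Implicit Defensive.

(* Following the b-edges from any state q, the iterates of [delta^~ b] end in
   a b-cycle; in a semi-flower automaton that cycle passes through q0, so
   every state lies in the b-cluster of q0. *)

Lemma fconnect_to_cycle (T : finType) (f : T -> T) (x : T) :
  exists2 y, fconnect f x y & fcycle f (orbit f y).
Proof.
have /trajectP [i lt_i_ord iter_ord] := looping_order f x.
exists (iter i f x); first exact: fconnect_iter.
apply/(orbitPcycle 3 0); exists (order f x - i).-1.
by rewrite prednK ?subn_gt0 // -iterD subnK ?(ltnW lt_i_ord).
Qed.

Lemma card_connect_classes_eq1 (T : finType) (e : rel T) (z : T) :
  connect_sym e -> (forall x, connect e x z) ->
  #|[set [set y | connect e x y] | x : T]| = 1.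
Proof.
move=> sym_e to_z; apply/eqP/cards1P; exists [set y | connect e z y].
apply/setP => C; rewrite inE; apply/imsetP/eqP => [[x _ ->] | ->].
  by apply/setP => y; rewrite !inE (same_connect sym_e (to_z x)).
by exists z.
Qed.

Section LetterCycles.
Variables (Q A : finType) (delta : Q -> A -> Q) (b : A).
Local Notation f := (delta^~ b).

Lemma walk_from_b_edges x s :
  walk_from delta (f x) [seq (q, b) | q <- s] = fpath f x s.
Proof. by elim: s x => //= q s IH x; rewrite IH eq_sym. Qed.

Lemma is_cycle_b_edges y p :
  fcycle f (y :: p) -> uniq (y :: p) ->
  is_cycle delta y [seq (q, b) | q <- y :: p].
Proof.
move=> cyc_p uniq_p; have inj_f := inj_cycle cyc_p.
move: cyc_p => /=; rewrite rcons_path => /andP [path_p /eqP last_p].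
rewrite /is_cycle.
have -> : map (tgt delta) [seq (q, b) | q <- y :: p] = map f (y :: p)
  by rewrite -map_comp.
apply/and5P; split => //.
- by rewrite /= eqxx walk_from_b_edges.
- by rewrite /= last_map last_p.
- by rewrite (map_inj_in_uniq inj_f).
- have inj_pair : injective (pair^~ b : Q -> Q * A) by move=> q1 q2 [].
  by rewrite -(map_inj_uniq inj_pair) in uniq_p.
Qed.

Lemma is_cycle_orbit y :
  fcycle f (orbit f y) -> is_cycle delta y [seq (q, b) | q <- orbit f y].
Proof.
have -> : orbit f y = y :: traject f (f y) (order f y).-1
  by rewrite /orbit -orderSpred.
move=> cyc; apply: is_cycle_b_edges => //.
by rewrite -trajectS orderSpred orbit_uniq.
Qed.

Variables (q0 : Q) (F : {set Q}).
Hypothesis sfa : semi_flower delta q0 F.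

Lemma semi_flower_fcycle_fconnect y : fcycle f (orbit f y) -> fconnect f y q0.
Proof.
case: sfa => _ _ _ cycles_through_q0 /is_cycle_orbit/cycles_through_q0.
rewrite fconnect_orbit /walk_verts -map_comp inE => /orP [/eqP -> | /mapP [q orb_q ->]].
  exact: in_orbit.
exact: mem_orbit.
Qed.

Lemma semi_flower_connect_b_adj q : connect (b_adj delta b) q q0.
Proof.
have [y q_to_y /semi_flower_fcycle_fconnect y_to_q0] := fconnect_to_cycle f q.
apply: connect_sub (connect_trans q_to_y y_to_q0) => x _ /eqP <-.
by apply: connect1; rewrite /b_adj eqxx.
Qed.

End LetterCycles.

Theorem mainTheorem1 (Q A : finType) (delta : Q -> A -> Q) (q0 : Q) (F : {set Q}) :
  semi_flower delta q0 F -> forall b : A, one_cluster delta b.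
Proof.
move=> sfa b; apply: (card_connect_classes_eq1 (z := q0)).
  by apply: sym_connect_sym => x y; rewrite /b_adj orbC.
exact: semi_flower_connect_b_adj sfa.
Qed.
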